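(* For any $d \in \mathbb{N}$ and any graph class $\mathcal{C}$, the following are equivalent: (i) $\mathcal{C}$ has tree rank at most $d$; (ii) for every $r \in \mathbb{N}$ there exists $m \in \mathbb{N}$ such that every vertex of every graph in $\mathcal{C}$ has $(r,m)$-rank at most $d$.
   Context: Graphs are finite and simple. For a graph $G$ and vertex $v$, $N_r^G(v)$ is the closed $r$-neighborhood of $v$ (all vertices reachable from $v$ by a path with at most $r$ edges, including $v$); $G-S$ is the subgraph induced on $V(G)\setminus S$. The depth of a rooted tree is the number of edges on a leaf-to-root path; $T_{d,m}$ is the rooted tree of depth $d$ in which every non-leaf vertex has exactly $m$ children. A $\le r$-subdivision of a graph $H$ is obtained by replacing each edge $uv$ by a path from $u$ to $v$ with at most $r$ internal vertices (paths internally disjoint). $H$ is an $r$-shallow topological minor of $G$ if $G$ has a subgraph isomorphic to a $\le r$-subdivision of $H$. A graph class $\mathcal{C}$ has tree rank at most $d$ if for every $r\in\mathbb{N}$ there exists $m\in\mathbb{N}$ such that no $G\in\mathcal{C}$ contains $T_{d,m}$ as an $r$-shallow topological minor. The $(r,m)$-rank of vertices of $G$ (values in $\mathbb{N}\cup\{\infty\}$) is defined by the following procedure: initially every vertex has rank $\infty$; in rounds $i=1,2,3,\dots$, every vertex $v$ that currently has rank $\infty$ receives rank $i$ if there exists a set $S\subseteq V(G)\setminus\{v\}$ with $|S|\le m$ such that every vertex of $N_r^{G-S}(v)\setminus\{v\}$ received a finite rank in rounds $1,\dots,i-1$ (all vertices are checked simultaneously in a round); the procedure stops when all vertices have finite rank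 or a round assigns no new rank. Vertices still of rank $\infty$ keep rank $\infty$. *)

From mathcomp Require Import all_boot.
Set Implicit Arguments. Unset Strict Implicit. Unset Printing Implicit Defensive.

Record sgraph := SGraph {
  gn : nat;
  gadj : rel 'I_gn;
  gsym : symmetric gadj;
  girr : irreflexive gadj }.

Definition vert (G : sgraph) := 'I_(gn G).

Definition graph_class := sgraph -> Prop.

(* Closed k-neighbourhood of v in G - S (for v \notin S): vertices reachable
   from v by a path with at most k edges avoiding S. *)
Fixpoint nballS (G : sgraph) (S : {set vert G}) (k : nat) (v : vert G)
  : {set vert G} :=
  match k with
  | 0 => [set v]
  | k'.+1 => nballS S k' v :|:
      [set u | (u \notin S) && [exists w in nballS S k' v, gadj w u]]
  end.

(* ranked G r m i = set of vertices that received a finite (r,m)-rank in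
   rounds 1..i of the procedure. *)
Fixpoint ranked (G : sgraph) (r m : nat) (i : nat) : {set vert G} :=
  match i with
  | 0 => set0
  | i'.+1 => ranked G r m i' :|:
      [set v | [exists S : {set vert G},
         [&& v \notin S, #|S| <= m &
             (nballS S r v :\ v) \subset ranked G r m i']]]
  end.

Definition rank_le (G : sgraph) (r m d : nat) (v : vert G) : Prop :=
  v \in ranked G r m d.

(* H (on finType VH with symmetric edge relation eH) is an r-shallow
   topological minor of G: G contains a subgraph isomorphic to a
   <= r-subdivision of H.  f maps branch vertices; P a b is the sequence of
   internal vertices of the path replacing the edge ab. *)
Definition shallow_top_minor (r : nat) (G : sgraph) (VH : finType) (eH : rel VH)
  : Prop :=
  exists f : VH -> vert G, injective f /\
  exists P : VH -> VH -> seq (vert G),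
    (forall a b, eH a b ->
       [/\ size (P a b) <= r, uniq (P a b),
           path (@gadj G) (f a) (rcons (P a b) (f b)) &
           forall x, x \in P a b -> forall c, x != f c]) /\
    (forall a b c d, eH a b -> eH c d ->
       ~~ (((a == c) && (b == d)) || ((a == d) && (b == c))) ->
       forall x, x \in P a b -> x \notin P c d).

(* The rooted tree T_{d,m}: vertices are sequences over 'I_m of length <= d
   (the root is the empty sequence); s is a child of t iff s extends t by one
   letter. *)
Definition tvert (d m : nat) := {k : 'I_d.+1 & k.-tuple 'I_m}.
Definition tseq d m (x : tvert d m) : seq 'I_m := tagged x.
Definition tchild d m (x y : tvert d m) : bool :=
  (size (tseq y) == (size (tseq x)).+1) && (take (size (tseq x)) (tseq y) == tseq x).
Definition tadj d m : rel (tvert d m) :=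
  fun x y => tchild x y || tchild y x.

Definition tree_rank_le (C : graph_class) (d : nat) : Prop :=
  forall r : nat, exists m : nat, forall G, C G ->
    ~ shallow_top_minor r G (@tadj d m).

From mathcomp Require Import all_boot zify.
Set Implicit Arguments. Unset Strict Implicit. Unset Printing Implicit Defensive.

(* (ii) -> (i): let f be the branch map of an r-shallow topological minor
   T_{d,m+1} of G.  A set S of at most m vertices misses one of the m+1
   internally disjoint paths from f x to the branch vertices of the children
   of x, so some child lies in the (r+1)-ball of f x in G - S.  By induction
   on h, f x has (r+1,m)-rank > h whenever x has depth <= d - h; in
   particular the root has rank > d.
   (i) -> (ii): conversely, a vertex u of (r,m)-rank > h is the root of a
   model of T_{h,M} avoiding any given small set X.  The children are grown
   one after the other: forbidding X and all vertices used so far, the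
   definition of the rank yields a path of length <= r from u to a vertex of
   rank > h - 1, from which a subtree is built recursively.  The number of
   forbidden vertices stays below m = tree_budget r M d. *)

Lemma path_rcons_rev (T : Type) (e : rel T) x y q :
  symmetric e -> path e x (rcons q y) -> path e y (rcons (rev q) x).
Proof.
move=> e_sym; have := rev_path e x (rcons q y).
rewrite last_rcons belast_rcons rev_cons => ->.
by rewrite (@eq_path _ _ e) // => a b; rewrite e_sym.
Qed.

Lemma uniq_flatten_map (T U : eqType) (g : T -> seq U) s x :
  uniq (flatten (map g s)) -> x \in s -> uniq (g x).
Proof.
elim: s => //= y s IH; rewrite cat_uniq inE => /and3P[gy_uniq _ s_uniq].
by case/orP=> [/eqP-> // | /IH]; apply.
Qed.

Lemma uniq_flatten_map_inj (T U : eqType) (g : T -> seq U) s x y z :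
  uniq (flatten (map g s)) -> x \in s -> y \in s -> z \in g x -> z \in g y ->
  x = y.
Proof.
elim: s => //= w s IH; rewrite cat_uniq !inE => /and3P[_ gw_fresh s_uniq].
have notin_gw t : t \in s -> z \in g t -> z \notin g w.
  move=> ts zt; apply: contra gw_fresh => zw.
  by apply/hasP; exists z => //; apply/flatten_mapP; exists t.
case/orP=> [/eqP-> | xs] /orP[/eqP-> // | ys] zx zy.
- by have := notin_gw y ys zy; rewrite zx.
- by have := notin_gw x xs zx; rewrite zy.
- exact: IH.
Qed.

Lemma disjoint_family_avoid (I T : finType) (B : {set I}) (A : I -> seq T)
    (S : {set T}) :
  (forall i j z, i \in B -> j \in B -> z \in A i -> z \in A j -> i = j) ->
  #|S| < #|B| -> exists2 i, i \in B & [disjoint A i & S].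
Proof.
move=> A_disj ltSB.
have [i /andP[iB iS] | meets] := pickP [pred i | (i \in B) && [disjoint A i & S]].
  by exists i.
pose g i := [pick z in S | z \in A i].
have gS i : i \in B -> exists2 z, g i = Some z & (z \in S) && (z \in A i).
  move=> iB; rewrite /g; case: pickP => [z zSA | none]; first by exists z.
  move: (meets i); rewrite /= iB disjoint_has => /negbFE /hasP[z zA zS].
  by move: (none z); rewrite zS zA.
suff: #|B| <= #|S| by rewrite leqNgt ltSB.
rewrite -(card_in_imset (f := g)); last first.
  move=> i j iB jB; have [z -> /andP[_ zi]] := gS i iB.
  have [z' -> /andP[_ zj]] := gS j jB; move=> [ezz'].
  by apply: (A_disj i j z) => //; rewrite ezz'.
rewrite -(card_imset S (@Some_inj _)); apply: subset_leq_card.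
by apply/subsetP => _ /imsetP[i /gS[z -> /andP[zS _]] ->]; apply: imset_f.
Qed.

Lemma card_setU_seq (T : finType) (X : {set T}) s :
  #|X :|: [set z in s]| <= #|X| + size s.
Proof.
apply: leq_trans (leq_card_setU _ _) _.
by rewrite leq_add2l cardsE card_size.
Qed.

Section Neighbourhoods.
Variables (G : sgraph) (S : {set vert G}).

Lemma nballS_mono k k' v : k <= k' -> nballS S k v \subset nballS S k' v.
Proof.
elim: k' => [|k' IH]; first by rewrite leqn0 => /eqP ->.
rewrite leq_eqVlt => /orP[/eqP -> // | /IH kk'].
exact: subset_trans kk' (subsetUl _ _).
Qed.

Lemma nballS_path v p :
  path (@gadj G) v p -> [disjoint p & S] -> last v p \in nballS S (size p) v.
Proof.
elim/last_ind: p => [|p u IH]; first by rewrite set11.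
rewrite rcons_path !disjoint_has has_rcons negb_or last_rcons size_rcons.
move=> /andP[pv pu] /andP[uS pS] /=; rewrite !inE uS /=.
by apply/orP; right; apply/existsP; exists (last v p); rewrite IH ?disjoint_has.
Qed.

Lemma nballS_exists_path k v u :
  u \in nballS S k v ->
  exists p, [/\ path (@gadj G) v p, last v p = u, size p <= k & [disjoint p & S]].
Proof.
elim: k u => [|k IH] u /=.
  by rewrite inE => /eqP->; exists [::]; rewrite disjoint_has.
rewrite !inE => /orP[/IH[p [vp pu pk pS]] | /andP[uS /existsP[w /andP[wk wu]]]].
  by exists p; rewrite leqW.
have [p [vp pw pk pS]] := IH w wk.
exists (rcons p u); rewrite rcons_path last_rcons size_rcons vp pw wu ltnS pk.
by rewrite disjoint_has has_rcons negb_or uS -disjoint_has.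
Qed.

Lemma nballS_uniq_path k v u :
  u \in nballS S k v -> u != v ->
  exists p : seq (vert G), [/\ path (@gadj G) v (rcons p u), uniq (v :: rcons p u),
                size p < k & [disjoint rcons p u & S]].
Proof.
move=> /nballS_exists_path[q [vq <- qk qS]].
case: (shortenP vq) => q' vq' vq'_uniq q'q.
case/lastP: q' vq' vq'_uniq q'q => [|p w]; rewrite ?last_rcons ?eqxx //.
move=> vpu vpu_uniq pu_q _; exists p; split=> //.
  have := uniq_leq_size (proj2 (andP vpu_uniq)) pu_q; rewrite size_rcons.
  by move/leq_trans; apply.
by apply: disjointWl qS; apply/subsetP.
Qed.

End Neighbourhoods.

Section Tree.
Variables d m : nat.
Implicit Types x y : tvert d m.

Lemma size_tseq x : size (tseq x) <= d.
Proof. by case: x => k t; rewrite /tseq /= size_tuple -ltnS. Qed.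

Lemma tseq_inj : injective (@tseq d m).
Proof.
case=> k t [k' t']; rewrite /tseq /= => ett'.
have ekk' : k = k' by apply: val_inj; rewrite /= -(size_tuple t) ett' size_tuple.
by subst k'; congr existT; apply: val_inj.
Qed.

Lemma tseq_onto s : size s <= d -> exists x, tseq x = s.
Proof.
move=> sd; have sd' : size s < d.+1 by [].
exists (Tagged (fun k : 'I_d.+1 => k.-tuple 'I_m)
          (@Tuple (Ordinal sd') _ s (eqxx _))).
by [].
Qed.

Lemma tchildP x y : reflect (exists i, tseq y = rcons (tseq x) i) (tchild x y).
Proof.
apply: (iffP andP) => [[/eqP sy /eqP ty] | [i ->]]; last first.
  by rewrite size_rcons -cats1 take_size_cat.
have := cat_take_drop (size (tseq x)) (tseq y); rewrite ty.
have : size (drop (size (tseq x)) (tseq y)) = 1 by rewrite size_drop sy subSnn.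
by case: drop => [|i []] // _ <-; exists i; rewrite cats1.
Qed.

Lemma tchild_size x y : tchild x y -> size (tseq y) = (size (tseq x)).+1.
Proof. by case/tchildP=> i ->; rewrite size_rcons. Qed.

Lemma tparent_uniq x x' y : tchild x y -> tchild x' y -> x = x'.
Proof.
move=> /tchildP[i ey] /tchildP[i']; rewrite ey.
by case/rcons_inj => /tseq_inj.
Qed.

Lemma card_tchild x : size (tseq x) < d -> #|[set y | tchild x y]| = m.
Proof.
move=> xd; pose child i := odflt x [pick y | tseq y == rcons (tseq x) i].
have childE i : tseq (child i) = rcons (tseq x) i.
  rewrite /child; case: pickP => [y /eqP // | none].
  have [y ey] : exists y, tseq y = rcons (tseq x) i.
    by apply: tseq_onto; rewrite size_rcons.
  by move: (none y); rewrite ey eqxx.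
have child_inj : injective child.
  by move=> i j /(congr1 (@tseq d m)); rewrite !childE => /rcons_inj[].
suff -> : [set y | tchild x y] = child @: setT.
  by rewrite card_imset // cardsT card_ord.
apply/setP => y; rewrite inE; apply/tchildP/imsetP => [[i ey] | [i _ ->]].
  by exists i => //; apply: tseq_inj; rewrite childE.
by exists i; rewrite childE.
Qed.

End Tree.

Lemma notin_rankedS (G : sgraph) r m h v :
  v \notin ranked G r m h.+1 <->
  v \notin ranked G r m h /\
  forall S : {set vert G}, v \notin S -> #|S| <= m ->
    exists2 u, u \in nballS S r v :\ v & u \notin ranked G r m h.
Proof.
rewrite /= in_setU negb_or inE; split.
  case/andP=> -> /existsPn none; split=> // S vS Sm.
  by move: (none S); rewrite vS Sm /= => /subsetPn.
case=> -> reach; apply/existsPn => S; apply/and3P => -[vS Sm /subsetP sub].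
by have [u /sub uh] := reach S vS Sm; rewrite uh.
Qed.

Lemma unranked_branch (G : sgraph) r m h u (S : {set vert G}) :
  u \notin ranked G r m h.+1 -> u \notin S -> #|S| <= m ->
  exists p u', [/\ u' \notin ranked G r m h, path (@gadj G) u (rcons p u'),
    uniq (rcons p u'), size p < r & [disjoint rcons p u' & u |: S]].
Proof.
move=> /notin_rankedS[_ reach] uS Sm.
have [u' /setD1P[u'u u'_ball] u'_unranked] := reach S uS Sm.
have [p [pu_path /andP[upu pu_uniq] pr pu_S]] := nballS_uniq_path u'_ball u'u.
exists p, u'; split=> //; rewrite disjoint_has; apply/hasPn => z zpu /=.
by rewrite in_setU1 (disjointFr pu_S zpu) orbF; apply: contraNneq upu => <-.
Qed.

Section ShallowModel.
Variables (r : nat) (G : sgraph) (VH : finType) (eH : rel VH).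
Variables (f : VH -> vert G) (P : VH -> VH -> seq (vert G)).
Hypothesis f_inj : injective f.
Hypothesis P_path : forall a b, eH a b ->
  [/\ size (P a b) <= r, uniq (P a b),
      path (@gadj G) (f a) (rcons (P a b) (f b)) &
      forall x, x \in P a b -> forall c, x != f c].
Hypothesis P_disjoint : forall a b c e, eH a b -> eH c e ->
  ~~ (((a == c) && (b == e)) || ((a == e) && (b == c))) ->
  forall x, x \in P a b -> x \notin P c e.

Lemma branch_paths_disjoint a b b' z : eH a b -> eH a b' ->
  z \in rcons (P a b) (f b) -> z \in rcons (P a b') (f b') -> b = b'.
Proof.
move=> ab ab'; rewrite !mem_rcons !inE.
have [_ _ _ Pb_f] := P_path ab; have [_ _ _ Pb'_f] := P_path ab'.
case/orP=> [/eqP-> | zb] /orP[/eqP ez | zb'].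
- exact: f_inj.
- by have := Pb'_f _ zb' b; rewrite eqxx.
- by have := Pb_f _ zb b'; rewrite ez eqxx.
apply/eqP; apply: contraT => bb'.
have edges_differ : ~~ (((a == a) && (b == b')) || ((a == b') && (b == a))).
  rewrite eqxx (negbTE bb') /=; apply/andP => -[/eqP ab'' /eqP ba].
  by rewrite ba ab'' eqxx in bb'.
by rewrite (negbTE (P_disjoint ab ab' edges_differ zb)) in zb'.
Qed.

Lemma branch_in_ball a (B : {set VH}) (S : {set vert G}) :
  (forall b, b \in B -> eH a b) -> #|S| < #|B| ->
  exists2 b, b \in B & f b \in nballS S r.+1 (f a).
Proof.
move=> aB ltSB.
have [b bB bS] := @disjoint_family_avoid _ _ B (fun b => rcons (P a b) (f b)) S
  (fun b b' z bB b'B => branch_paths_disjoint (aB b bB) (aB b' b'B)) ltSB.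
have [Pr _ ab_path _] := P_path (aB b bB).
have := nballS_path ab_path bS; rewrite last_rcons size_rcons => b_ball.
by exists b => //; apply: subsetP b_ball; apply: nballS_mono.
Qed.

End ShallowModel.

Lemma tree_minor_unranked r (G : sgraph) d m :
  shallow_top_minor r G (@tadj d m.+1) -> exists v, v \notin ranked G r.+1 m d.
Proof.
case=> f [f_inj [P [P_path P_disjoint]]].
suff unranked h x : size (tseq x) + h <= d -> f x \notin ranked G r.+1 m h.
  have [root root_nil] := @tseq_onto d m.+1 [::] isT.
  by exists (f root); apply: unranked; rewrite root_nil.
elim: h x => [|h IH] x xh; first by rewrite inE.
apply/notin_rankedS; split=> [|S _ Sm]; first by apply: IH; lia.
have children_adj y : y \in [set y | tchild x y] -> tadj x y.
  by rewrite inE /tadj => ->.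
have S_lt_children : #|S| < #|[set y | tchild x y]| by rewrite card_tchild; lia.
have [y] := branch_in_ball f_inj P_path P_disjoint children_adj S_lt_children.
rewrite inE => xy y_ball; exists (f y).
  rewrite in_setD1 y_ball andbT; apply: contraTneq xy => /f_inj ->.
  by apply/negP => /tchild_size; lia.
by apply: IH; rewrite (tchild_size xy); lia.
Qed.

Section TreeModel.
Variables (G : sgraph) (r M : nat).

(* In a
   model, F s is the branch vertex of node s and Q s lists the internal
   vertices of the path from the branch vertex of the parent of s to F s; for
   the root, Q [::] is a stem ending in F [::], and it is part of the trace. *)
Fixpoint nodes h : seq (seq 'I_M) :=
  [::] :: if h is h'.+1 then [seq i :: s | i <- enum 'I_M, s <- nodes h'] else [::].

Lemma mem_nodes h s : (s \in nodes h) = (size s <= h).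
Proof.
elim: h s => [|h IH] [|i s] //=; rewrite in_cons /=.
apply/allpairsP/idP => [[[j t] [_ /= th [_ ->]]] | sh]; first by rewrite ltnS -IH.
by exists (i, s); rewrite mem_enum IH.
Qed.

Definition trace (F : seq 'I_M -> vert G) (Q : seq 'I_M -> seq (vert G)) h :=
  flatten [seq rcons (Q s) (F s) | s <- nodes h].

Lemma trace_nodesS F Q h :
  trace F Q h.+1 = rcons (Q [::]) (F [::]) ++
    flatten [seq trace (fun s => F (i :: s)) (fun s => Q (i :: s)) h | i <- enum 'I_M].
Proof.
rewrite /trace /=; congr (_ ++ _).
by elim: (enum 'I_M) => //= i e IH; rewrite map_cat flatten_cat IH -map_comp.
Qed.

Definition tree_model h F Q :=
  (forall s i, size s < h ->
     size (Q (rcons s i)) <= r /\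
     path (@gadj G) (F s) (rcons (Q (rcons s i)) (F (rcons s i)))) /\
  uniq (trace F Q h).

Section ModelToMinor.
Variables (d : nat) (F : seq 'I_M -> vert G) (Q : seq 'I_M -> seq (vert G)).
Hypothesis model : tree_model d F Q.

Lemma model_seg_inj s t z : size s <= d -> size t <= d ->
  z \in rcons (Q s) (F s) -> z \in rcons (Q t) (F t) -> s = t.
Proof. by rewrite -!mem_nodes; apply: uniq_flatten_map_inj model.2. Qed.

Lemma model_seg_uniq s : size s <= d -> uniq (rcons (Q s) (F s)).
Proof. by rewrite -mem_nodes; apply: uniq_flatten_map model.2. Qed.

Lemma model_internal_not_branch s t z : size s <= d -> size t <= d ->
  z \in Q s -> z != F t.
Proof.
move=> sd td zs; apply/eqP => zt.
have est : s = t.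
  by apply: (model_seg_inj (z := z) sd td); rewrite mem_rcons inE ?zs ?zt ?eqxx ?orbT.
by move: (model_seg_uniq sd); rewrite rcons_uniq est -zt -est zs.
Qed.

Lemma model_child_edge (a b : tvert d M) : tchild a b ->
  [/\ size (Q (tseq b)) <= r, uniq (Q (tseq b)),
      path (@gadj G) (F (tseq a)) (rcons (Q (tseq b)) (F (tseq b))) &
      forall x, x \in Q (tseq b) -> forall c : tvert d M, x != F (tseq c)].
Proof.
case/tchildP=> i ebi; have ad : size (tseq a) < d.
  by have := size_tseq b; rewrite ebi size_rcons.
have [Qr ab_path] := model.1 _ i ad; rewrite ebi; split=> // [|x xQ c].
  by have := model_seg_uniq (size_tseq b); rewrite ebi rcons_uniq => /andP[].
by apply: model_internal_not_branch xQ; rewrite -?ebi size_tseq.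
Qed.

Lemma tree_model_minor : shallow_top_minor r G (@tadj d M).
Proof.
pose P (a b : tvert d M) := if tchild a b then Q (tseq b) else rev (Q (tseq a)).
have P_child a b x : tadj a b -> x \in P a b -> exists c, [/\ tchild c.1 c.2,
    x \in Q (tseq c.2) & (c == (a, b)) || (c == (b, a))].
  rewrite /P /tadj; case: ifP => [ab _ xb | _ /= ba].
    by exists (a, b); rewrite eqxx.
  by rewrite mem_rev => xa; exists (b, a); rewrite eqxx orbT.
exists (fun x => F (tseq x)); split.
  move=> x y exy; apply/tseq_inj/(model_seg_inj (z := F (tseq x)));
  by rewrite ?size_tseq // ?exy mem_rcons mem_head.
exists P; split=> [a b | a b c e ab ce edges_differ x xab].
  rewrite /tadj /P; case: ifP => [/model_child_edge // | _ /= /model_child_edge].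
  case=> Qr Q_uniq ba_path Q_branch; split; rewrite ?size_rev ?rev_uniq //.
    exact: path_rcons_rev (@gsym G) ba_path.
  by move=> x; rewrite mem_rev; apply: Q_branch.
apply/negP => xce.
have [[p1 c1] [/= pc1 x1 E1]] := P_child _ _ _ ab xab.
have [[p2 c2] [/= pc2 x2 E2]] := P_child _ _ _ ce xce.
have ec : c1 = c2.
  apply/tseq_inj/(model_seg_inj (z := x));
  by rewrite ?size_tseq // mem_rcons inE ?x1 ?x2 orbT.
subst c2; have ep := tparent_uniq pc1 pc2; subst p2.
move: E1 E2 edges_differ; rewrite !xpair_eqE.
by do 2![case/orP=> /andP[/eqP<- /eqP<-]]; rewrite !eqxx ?orbT.
Qed.

End ModelToMinor.

End TreeModel.

(* Bounds the size of the trace of a model of T_{h,M}, stem excluded: the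
   root, then for each of the M children a path of at most r vertices and a
   subtree. *)
Fixpoint tree_budget r M h :=
  if h is h'.+1 then 1 + M * (r + tree_budget r M h') else 1.

Section Embedding.
Variables (G : sgraph) (r M m : nat).

Local Notation trace := (@trace G M).
Local Notation tree_model := (@tree_model G r M).
Local Notation budget := (tree_budget r M).

Definition embeds h p u (X : {set vert G}) := exists F Q,
  [/\ F [::] = u, Q [::] = p, tree_model h F Q, [disjoint trace F Q h & X]
    & size (trace F Q h) <= size p + budget h].

Lemma embeds0 p u (X : {set vert G}) :
  uniq (rcons p u) -> [disjoint rcons p u & X] -> embeds 0 p u X.
Proof.
move=> pu_uniq puX; exists (fun _ => u), (fun _ => p).
by rewrite /tree_model /trace /= cats0 size_rcons addn1.
Qed.

Definition subtree := ((seq 'I_M -> vert G) * (seq 'I_M -> seq (vert G)))%type.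

Definition hangs_from h u (c : subtree) :=
  [/\ size (c.2 [::]) <= r, path (@gadj G) u (rcons (c.2 [::]) (c.1 [::]))
    & tree_model h c.1 c.2].

Definition forest_trace h (cs : seq subtree) := flatten [seq trace c.1 c.2 h | c <- cs].

Definition forest h p u (X : {set vert G}) k cs :=
  [/\ size cs = k, forall c0 i, i < k -> hangs_from h u (nth c0 cs i),
      uniq (rcons p u ++ forest_trace h cs),
      [disjoint rcons p u ++ forest_trace h cs & X]
    & size (forest_trace h cs) <= k * (r + budget h)].

Section GrowForest.
Variables (h : nat) (p : seq (vert G)) (u : vert G) (X : {set vert G}).
Hypothesis embeds_h : forall p' u' (X' : {set vert G}), u' \notin ranked G r m h ->
  uniq (rcons p' u') -> [disjoint rcons p' u' & X'] ->
  #|X'| + size p' + budget h <= m -> embeds h p' u' X'.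
Hypothesis u_unranked : u \notin ranked G r m h.+1.
Hypothesis X_budget : #|X| + size p + budget h.+1 <= m.
Hypothesis pu_uniq : uniq (rcons p u).
Hypothesis puX : [disjoint rcons p u & X].

Lemma forest_cons k cs : k < M -> forest h p u X k cs ->
  exists c, forest h p u X k.+1 (c :: cs).
Proof.
move=> kM [size_cs hang]; set T := forest_trace h cs => tr_uniq tr_X tr_size.
have kM' : k.+1 * (r + budget h) <= M * (r + budget h) by apply: leq_mul.
have X_budget' : #|X| + size p + (1 + M * (r + budget h)) <= m := X_budget.
rewrite mulSn in kM'.
pose S := X :|: [set z in p ++ T].
have uS : u \notin S.
  move: tr_uniq tr_X; rewrite cat_rcons -cat1s uniq_catCA /= => /andP[upT _].
  by rewrite disjoint_cat disjoint_cons => /andP[_ /andP[uX _]]; rewrite !inE negb_or uX.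
have cardS : #|S| <= #|X| + size p + k * (r + budget h).
  apply: leq_trans (card_setU_seq _ _) _.
  by rewrite size_cat addnA leq_add2l; apply: tr_size.
have S_room : #|S| + (r + budget h) < m by lia.
have Sm : #|S| <= m by lia.
have [p' [u' [u'_unranked pu_path pu'_uniq p'r pu_X']]] :=
  unranked_branch u_unranked uS Sm.
pose X' : {set vert G} := u |: S.
have X'_budget : #|X'| + size p' + budget h <= m.
  rewrite cardsU1 uS -!addnA add1n; apply: leq_trans S_room.
  by rewrite ltnS leq_add2l leq_add2r ltnW.
have [F [Q [F0 Q0 model trX' tr_size']]] :=
  embeds_h u'_unranked pu'_uniq pu_X' X'_budget.
have fresh z : z \in trace F Q h -> z \notin X /\ z \notin rcons p u ++ T.
  move/(disjointFr trX')/negbT; rewrite in_setU1 in_setU inE !negb_or.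
  case/and3P=> zu zX zpT; split=> //.
  by rewrite cat_rcons !mem_cat in_cons (negbTE zu) /= -mem_cat.
have [_ trQ_uniq] := model.
exists (F, Q); rewrite /forest.
have -> : forest_trace h ((F, Q) :: cs) = trace F Q h ++ T by [].
split=> [|c0 [|i] | | |].
- by rewrite /= size_cs.
- by move=> _; split; rewrite /= ?F0 ?Q0 //; apply: ltnW.
- by rewrite ltnS; apply: hang.
- rewrite uniq_catCA cat_uniq trQ_uniq tr_uniq andbT /=.
  by apply/hasPn => z zpT; apply/negP => /fresh[_]; rewrite zpT.
- rewrite !disjoint_cat andbCA -disjoint_cat tr_X andbT disjoint_has.
  by apply/hasPn => z /fresh[].
- rewrite size_cat mulSn; apply: leq_add tr_size.
  by apply: leq_trans tr_size' _; rewrite leq_add2r ltnW.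
Qed.

Lemma forest_full : exists cs, forest h p u X M cs.
Proof.
suff grow k : k <= M -> exists cs, forest h p u X k cs by apply: grow.
elim: k => [_ | k IH kM].
  by exists [::]; split; rewrite /forest_trace /= ?cats0.
by have [cs /(forest_cons kM)[c]] := IH (ltnW kM); exists (c :: cs).
Qed.

End GrowForest.

Lemma forest_embeds h p u X cs : forest h p u X M cs -> embeds h.+1 p u X.
Proof.
case=> size_cs hang tr_uniq tr_X tr_size.
pose c0 : subtree := (fun _ => u, fun _ => p).
pose F (s : seq 'I_M) := if s is i :: s' then (nth c0 cs i).1 s' else u.
pose Q (s : seq 'I_M) := if s is i :: s' then (nth c0 cs i).2 s' else p.
have trF : trace F Q h.+1 = rcons p u ++ forest_trace h cs.
  rewrite trace_nodesS /forest_trace; congr (_ ++ flatten _).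
  by rewrite -[in RHS](mkseq_nth c0 cs) size_cs /mkseq -val_enum_ord -!map_comp.
exists F, Q; split; rewrite ?trF //; last first.
  by rewrite size_cat size_rcons addSn /= add1n addnS ltnS leq_add2l.
split; rewrite ?trF // => -[|j s] i /=.
  by case: (hang c0 i (ltn_ord i)).
rewrite ltnS => sh; have [_ _ [edges _]] := hang c0 j (ltn_ord j).
exact: edges.
Qed.

Lemma unranked_embeds h p u (X : {set vert G}) : u \notin ranked G r m h ->
  uniq (rcons p u) -> [disjoint rcons p u & X] ->
  #|X| + size p + budget h <= m -> embeds h p u X.
Proof.
elim: h p u X => [|h IH] p u X u_unranked pu_uniq puX X_budget.
  exact: embeds0.
have [cs] := forest_full IH u_unranked X_budget pu_uniq puX.
exact: forest_embeds.
Qed.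

End Embedding.

Lemma unranked_tree_minor (G : sgraph) r M d v :
  v \notin ranked G r (tree_budget r M d) d -> shallow_top_minor r G (@tadj d M).
Proof.
move=> v_unranked.
have disj0 : [disjoint [:: v] & (set0 : {set vert G})].
  by rewrite disjoint_cons inE disjoint_has.
have [|F [Q [_ _ model _ _]]] :=
  unranked_embeds (M := M) (p := [::]) v_unranked isT disj0 _.
  by rewrite cards0.
exact: tree_model_minor model.
Qed.

Theorem theorem1p3 (d : nat) (C : graph_class) :
  tree_rank_le C d <->
  (forall r : nat, exists m : nat,
     forall G : sgraph, C G -> forall v : vert G, rank_le r m d v).
Proof.
split=> [tree_rank r | ranks r].
  have [M no_minor] := tree_rank r; exists (tree_budget r M d) => G CG v.
  by apply/negPn/negP => /unranked_tree_minor; apply: no_minor.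
have [m ranked_all] := ranks r.+1; exists m.+1 => G CG /tree_minor_unranked[v].
by rewrite ranked_all.
Qed.
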